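(* Let $(A_k)$ be a sequence in $S_n$ converging to $A\in S_n$. Then there is $k_0$ such that for all $k\ge k_0$ and all $i\in\{1,\dots,n\}$ there is a unique $\kappa(k,i)\in\{1,\dots,n\}$ with $\Lambda_{\kappa(k,i)}(A_k)=\Lambda_i(A)$ and, if $\kappa(k,i)\ne n$, $\Lambda_{\kappa(k,i)+1}(A_k)\neq\Lambda_i(A)$. Moreover, if $i'$ is minimal with $\mathrm{syst}_{i'}(A)=\mathrm{syst}_i(A)$, then $\lim_{k\to\infty}\mathrm{syst}_{j_k}(A_k)=\mathrm{syst}_i(A)$ for every choice of integers $j_k$ with $\kappa(k,i'-1)<j_k\le\kappa(k,i)$.
   Context: $S_n=\mathrm{SO}_n\backslash\mathrm{SL}_n\mathbb R$; a point is represented by $A\in\mathrm{SL}_n\mathbb R$ up to left $\mathrm{SO}_n$. For $i=1,\dots,n$, $\mathrm{syst}_i(A)=\inf\{r>0:\dim_{\mathbb R}\mathrm{Span}_{\mathbb R}\{v\in\mathbb Z^n:|Av|<r\}\ge i\}$, and $\Lambda_i(A)=\mathrm{Span}_{\mathbb R}\{v\in\mathbb Z^n:|Av|\le\mathrm{syst}_i(A)\}$; by convention $\Lambda_0(A)=0$ (and correspondingly $\kappa(k,0)=0$). Thus $0\subsetneq\Lambda_1(A)\subset\dots\subset\Lambda_n(A)=\mathbb R^n$ with $\dim\Lambda_i(A)\ge i$. *)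

From Stdlib Require Import Reals Lra Lia ZArith Arith ClassicalEpsilon.
Open Scope R_scope.

(* Real n x n matrices and vectors are functions on nat; only indices < n matter. *)
Definition mat := nat -> nat -> R.
Definition vecZ := nat -> Z.
Definition vecR := nat -> R.

Fixpoint sumR (m : nat) (f : nat -> R) : R :=
  match m with O => 0 | S m' => sumR m' f + f m' end.

Definition mat_mul (n : nat) (A B : mat) : mat :=
  fun i j => sumR n (fun l => A i l * B l j).

Definition minor (j : nat) (M : mat) : mat :=
  fun a b => M (S a) (if (b <? j)%nat then b else S b).

Fixpoint det (n : nat) (M : mat) : R :=
  match n with
  | O => 1
  | S n' => sumR (S n') (fun j => (-1) ^ j * M O j * det n' (minor j M))
  end.

Definition SL (n : nat) (A : mat) : Prop := det n A = 1.
Definition SO (n : nat) (Q : mat) : Prop :=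
  det n Q = 1 /\
  forall i j, (i < n)%nat -> (j < n)%nat ->
    sumR n (fun l => Q l i * Q l j) = if Nat.eqb i j then 1 else 0.

Definition matvec (n : nat) (A : mat) (v : vecZ) : vecR :=
  fun i => sumR n (fun j => A i j * IZR (v j)).
Definition normAv (n : nat) (A : mat) (v : vecZ) : R :=
  sqrt (sumR n (fun i => (matvec n A v i) ^ 2)).

Definition lin_indep (n m : nat) (w : nat -> vecZ) : Prop :=
  forall c : nat -> R,
    (forall t, (t < n)%nat -> sumR m (fun l => c l * IZR (w l t)) = 0) ->
    forall l, (l < m)%nat -> c l = 0.

(* { r > 0 : dim Span_R {v in Z^n : |Av| < r} >= i }, using that the span of a
   set has dimension >= i iff the set contains i linearly independent vectors *)
Definition syst_set (n : nat) (A : mat) (i : nat) (r : R) : Prop :=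
  0 < r /\ exists w : nat -> vecZ,
    lin_indep n i w /\ forall l, (l < i)%nat -> normAv n A (w l) < r.

Definition is_inf (S : R -> Prop) (s : R) : Prop :=
  (forall r, S r -> s <= r) /\ (forall b, (forall r, S r -> b <= r) -> b <= s).

Definition syst (n : nat) (A : mat) (i : nat) : R :=
  epsilon (inhabits 0) (fun s => is_inf (syst_set n A i) s).

(* Lambda_i(A) = Span_R {v in Z^n : |Av| <= syst_i(A)} as a predicate on R^n;
   Lambda_0(A) = 0 by convention *)
Definition Lambda (n : nat) (A : mat) (i : nat) : vecR -> Prop :=
  fun x => match i with
  | O => forall t, (t < n)%nat -> x t = 0
  | S _ => exists (m : nat) (w : nat -> vecZ) (c : nat -> R),
      (forall l, (l < m)%nat -> normAv n A (w l) <= syst n A i) /\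
      forall t, (t < n)%nat -> x t = sumR m (fun l => c l * IZR (w l t))
  end.

(* equality of subspaces of R^n (vectors compared on coordinates < n) *)
Definition same_space (P Q : vecR -> Prop) : Prop := forall x, P x <-> Q x.

Definition kappa_prop (n : nat) (Ak A : mat) (i j : nat) : Prop :=
  same_space (Lambda n Ak j) (Lambda n A i) /\
  (j <> n -> ~ same_space (Lambda n Ak (S j)) (Lambda n A i)).

From Stdlib Require Import Reals Lra Lia ZArith Arith List.
From Stdlib Require Import Classical ClassicalEpsilon FunctionalExtensionality.
From mathcomp Require all_boot all_algebra Rstruct.
Open Scope R_scope.

(* Since [|Rot_k A_k v| = |A_k v|], we may replace [A_k] by [B_k := Rot_k A_k]: it has the
   same systoles and the same [Lambda_i], and converges entrywise to [A]. As [A] is invertible,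
   [A] and the [B_k] for large [k] are uniformly coercive, [|v|_1 <= C |B_k v|]. So below any
   bound there are only finitely many integer vectors: each [syst_i(A)] is attained and is
   followed by a gap [(syst_i(A), syst_i(A) + 2 eps)] containing no length [|Av|], and for large
   [k] the lengths [|B_k v|] of all relevant vectors are [eps/2]-close to [|Av|]. Then a vector
   of [B_k]-length at most [syst_i(A) + eps] has [A]-length at most [syst_i(A)] and conversely;
   so for the largest [kappa] with [syst_kappa(B_k) <= syst_i(A) + eps] we get
   [Lambda_kappa(B_k) = Lambda_i(A)], and comparing independent families of short vectors
   pins the systoles [syst_j(B_k)], [kappa(k,i'-1) < j <= kappa(k,i)], to [syst_i(A)]. *)

Lemma det_succ n M : det (S n) M = sumR (S n) (fun j => (-1) ^ j * M O j * det n (minor j M)).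
Proof. reflexivity. Qed.

Module MatrixBridge.
Import all_boot all_algebra Rstruct GRing.Theory.
Local Open Scope ring_scope.

Lemma sumR_big n (f : nat -> R) : sumR n f = \sum_(i < n) f i.
Proof.
elim: n => [|n IH] /=; first by rewrite big_ord0.
by rewrite big_ord_recr /= IH.
Qed.

Definition mxof n (A : mat) : 'M[R]_n := \matrix_(i < n, j < n) A i j.

Lemma pow_opp1 j : pow (-1) j = (-1) ^+ j :> R.
Proof. by elim: j => [|j IH] //=; rewrite exprS IH. Qed.

Lemma det_mxof n (A : mat) : det n A = \det (mxof n A).
Proof.
elim: n A => [|n IH] A; first by rewrite /= det_mx00.
rewrite det_succ (expand_det_row _ ord0) sumR_big; apply: eq_bigr => j _.
rewrite /cofactor IH mxE /= add0n pow_opp1.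
rewrite !RmultE mulrA [A 0%N j * _]mulrC; congr (_ * _).
congr (\det _); apply/matrixP => a b; rewrite !mxE /minor /= /bump.
congr (A _ _); case: ltnP => h; rewrite ?add0n ?add1n //.
- by have -> : (b <? j)%nat = true by apply/Nat.ltb_lt/ltP.
- by have -> : (b <? j)%nat = false by apply/Nat.ltb_ge/leP.
Qed.

Lemma left_inverse n (A : mat) : det n A <> 0 ->
  exists P : mat, forall t j, lt t n -> lt j n ->
    sumR n (fun l => P t l * A l j) = if Nat.eqb t j then 1 else 0.
Proof.
case: n A => [|n] A hd; first by exists (fun _ _ => 0) => t j /ltP.
have hu : mxof n.+1 A \in unitmx by rewrite unitmxE unitfE -det_mxof; apply/eqP.
exists (fun t l => invmx (mxof n.+1 A) (inord t) (inord l)) => t j /ltP ht /ltP hj.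
rewrite sumR_big.
transitivity ((invmx (mxof n.+1 A) *m mxof n.+1 A) (inord t) (inord j)).
  by rewrite mxE; apply: eq_bigr => l _; rewrite inord_val !mxE inordK.
rewrite (mulVmx hu) mxE.
have -> : (inord t == inord j :> 'I_n.+1) = Nat.eqb t j.
  case: (Nat.eqb_spec t j) => [->|ne]; first by rewrite eqxx.
  by apply/eqP => /(congr1 val); rewrite /= !inordK.
by case: (Nat.eqb t j).
Qed.
End MatrixBridge.

Lemma det_neq0_left_inverse n (A : mat) : det n A <> 0 ->
  exists P : mat, forall t j, (t < n)%nat -> (j < n)%nat ->
    sumR n (fun l => P t l * A l j) = if Nat.eqb t j then 1 else 0.
Proof. apply MatrixBridge.left_inverse. Qed.

Lemma sumR_ext m f g : (forall l, (l < m)%nat -> f l = g l) -> sumR m f = sumR m g.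
Proof.
induction m; simpl; intros H; auto.
rewrite IHm by (intros; apply H; lia). rewrite H by lia. reflexivity.
Qed.

Lemma sumR_zero m : sumR m (fun _ => 0) = 0.
Proof. induction m; simpl; auto. rewrite IHm; ring. Qed.

Lemma sumR_add m f g : sumR m (fun l => f l + g l) = sumR m f + sumR m g.
Proof. induction m; simpl; [ring|]. rewrite IHm; ring. Qed.

Lemma sumR_sub m f g : sumR m (fun l => f l - g l) = sumR m f - sumR m g.
Proof. induction m; simpl; [ring|]. rewrite IHm; ring. Qed.

Lemma sumR_mult_l m c f : sumR m (fun l => c * f l) = c * sumR m f.
Proof. induction m; simpl; [ring|]. rewrite IHm; ring. Qed.

Lemma sumR_mult_r m c f : sumR m (fun l => f l * c) = sumR m f * c.
Proof. induction m; simpl; [ring|]. rewrite IHm; ring. Qed.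

Lemma sumR_const m c : sumR m (fun _ => c) = INR m * c.
Proof. induction m; simpl sumR. simpl; ring. rewrite IHm, S_INR; ring. Qed.

Lemma sumR_swap m p F :
  sumR m (fun l => sumR p (F l)) = sumR p (fun q => sumR m (fun l => F l q)).
Proof.
induction m; simpl.
- rewrite sumR_zero; auto.
- rewrite IHm, <- sumR_add. reflexivity.
Qed.

Lemma sumR_split m1 m2 f :
  sumR (m1 + m2) f = sumR m1 f + sumR m2 (fun l => f (m1 + l)%nat).
Proof.
induction m2; simpl.
- rewrite Nat.add_0_r; ring.
- rewrite Nat.add_succ_r; simpl. rewrite IHm2; ring.
Qed.

Lemma sumR_delta_l m t f : (t < m)%nat ->
  sumR m (fun l => if Nat.eqb l t then f l else 0) = f t.
Proof.
induction m; intros H; [lia|]. simpl.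
destruct (Nat.eq_dec t m).
- subst. rewrite Nat.eqb_refl, (sumR_ext _ _ (fun _ => 0)), sumR_zero; [ring|].
  intros l hl. destruct (Nat.eqb_spec l m); auto; lia.
- rewrite IHm by lia. destruct (Nat.eqb_spec m t); [lia|ring].
Qed.

Lemma sumR_delta_r m t f : (t < m)%nat ->
  sumR m (fun l => if Nat.eqb t l then f l else 0) = f t.
Proof.
intros H. rewrite <- (sumR_delta_l m t f H). apply sumR_ext.
intros l _. rewrite Nat.eqb_sym; auto.
Qed.

Definition skip_index (l0 l : nat) : nat := if (l <? l0)%nat then l else S l.

Lemma sumR_skip m l0 f : (l0 < m)%nat ->
  sumR m f = sumR (m - 1) (fun q => f (skip_index l0 q)) + f l0.
Proof.
induction m; intros H; [lia|].
simpl sumR at 1. replace (S m - 1)%nat with m by lia.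
destruct (Nat.eq_dec l0 m).
- subst. f_equal. apply sumR_ext. intros l hl.
  unfold skip_index. destruct (Nat.ltb_spec l m); auto; lia.
- rewrite IHm by lia. destruct m; [lia|]. simpl (S m - 1)%nat. rewrite Nat.sub_0_r.
  simpl sumR at 2.
  replace (skip_index l0 m) with (S m)
    by (unfold skip_index; destruct (Nat.ltb_spec m l0); lia).
  ring.
Qed.

Lemma sumR_le m f g : (forall l, (l < m)%nat -> f l <= g l) -> sumR m f <= sumR m g.
Proof.
induction m; simpl; intros H; [lra|].
specialize (IHm (fun l h => H l ltac:(lia))). specialize (H m ltac:(lia)). lra.
Qed.

Lemma sumR_nonneg m f : (forall l, (l < m)%nat -> 0 <= f l) -> 0 <= sumR m f.
Proof. intros. rewrite <- (sumR_zero m). apply sumR_le; auto. Qed.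

Lemma sumR_abs m f : Rabs (sumR m f) <= sumR m (fun l => Rabs (f l)).
Proof.
induction m; simpl.
- rewrite Rabs_R0; lra.
- eapply Rle_trans; [apply Rabs_triang|lra].
Qed.

Lemma sumR_term_le m f l : (forall q, (q < m)%nat -> 0 <= f q) -> (l < m)%nat ->
  f l <= sumR m f.
Proof.
induction m; intros H hl; [lia|]. simpl.
destruct (Nat.eq_dec l m).
- subst. pose proof (sumR_nonneg m f (fun q h => H q ltac:(lia))). lra.
- pose proof (IHm (fun q h => H q ltac:(lia)) ltac:(lia)). pose proof (H m ltac:(lia)). lra.
Qed.

Lemma sq_sumR m (f : nat -> R) :
  (sumR m f) ^ 2 = sumR m (fun l => sumR m (fun q => f l * f q)).
Proof.
replace ((sumR m f) ^ 2) with (sumR m f * sumR m f) by ring.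
rewrite <- sumR_mult_r. apply sumR_ext. intros l hl. rewrite sumR_mult_l. auto.
Qed.

(* [m] unknowns, [r < m] equations. Solve the last equation for an unknown [l0] with a
   nonzero coefficient, substitute it into the others and recurse on [m - 1] unknowns. *)
Lemma homog_system_nontrivial_sol r : forall m (a : nat -> nat -> R), (r < m)%nat ->
  exists c, (exists l, (l < m)%nat /\ c l <> 0) /\
    forall p, (p < r)%nat -> sumR m (fun l => c l * a l p) = 0.
Proof.
induction r; intros m a hm.
- exists (fun _ => 1). split; [exists O; split; [lia|lra]|intros; lia].
- destruct (classic (exists l0, (l0 < m)%nat /\ a l0 r <> 0)) as [[l0 [hl0 hne]]|hno].
  + set (a' := fun q p => a (skip_index l0 q) p - a (skip_index l0 q) r / a l0 r * a l0 p).
    destruct (IHr (m - 1)%nat a' ltac:(lia)) as [c' [[l1 [hl1 hc1]] hc']].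
    set (s := sumR (m - 1) (fun q => c' q * a (skip_index l0 q) r)).
    set (c := fun l => if Nat.eqb l l0 then - s / a l0 r
                       else c' (if (l <? l0)%nat then l else (l - 1)%nat)).
    assert (hcsk : forall q, c (skip_index l0 q) = c' q).
    { intros q. unfold c, skip_index. destruct (Nat.ltb_spec q l0).
      - destruct (Nat.eqb_spec q l0); [lia|]. destruct (Nat.ltb_spec q l0); [auto|lia].
      - destruct (Nat.eqb_spec (S q) l0); [lia|]. destruct (Nat.ltb_spec (S q) l0); [lia|].
        f_equal; lia. }
    assert (hcl0 : c l0 = - s / a l0 r) by (unfold c; rewrite Nat.eqb_refl; auto).
    exists c. split.
    * exists (skip_index l0 l1). split; [|rewrite hcsk; auto].
      unfold skip_index; destruct (Nat.ltb_spec l1 l0); lia.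
    * intros p hp. rewrite (sumR_skip m l0) by auto.
      rewrite (sumR_ext _ _ (fun q => c' q * a (skip_index l0 q) p))
        by (intros; rewrite hcsk; auto).
      rewrite hcl0. destruct (Nat.eq_dec p r) as [->|].
      { unfold s. field. auto. }
      specialize (hc' p ltac:(lia)). unfold a' in hc'.
      rewrite (sumR_ext _ _ (fun q => c' q * a (skip_index l0 q) p
                 - (c' q * a (skip_index l0 q) r) * (a l0 p / a l0 r))) in hc'
        by (intros; field; auto).
      rewrite sumR_sub, sumR_mult_r in hc'. fold s in hc'.
      replace (- s / a l0 r * a l0 p) with (- (s * (a l0 p / a l0 r))) by (field; auto).
      lra.
  + destruct (IHr m a ltac:(lia)) as [c [hc1 hc2]].
    exists c. split; auto. intros p hp. destruct (Nat.eq_dec p r) as [->|].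
    * rewrite (sumR_ext _ _ (fun _ => 0)) by
        (intros l hl; destruct (Req_dec (a l r) 0) as [e|e];
         [rewrite e; ring|exfalso; apply hno; eauto]).
      apply sumR_zero.
    * apply hc2; lia.
Qed.

Definition indepR (n m : nat) (X : nat -> nat -> R) : Prop :=
  forall c : nat -> R,
    (forall t, (t < n)%nat -> sumR m (fun l => c l * X l t) = 0) ->
    forall l, (l < m)%nat -> c l = 0.

Lemma indepR_in_span_le n m r (X Y a : nat -> nat -> R) :
  indepR n m X ->
  (forall l t, (l < m)%nat -> (t < n)%nat -> X l t = sumR r (fun p => a l p * Y p t)) ->
  (m <= r)%nat.
Proof.
intros hind hX. destruct (le_lt_dec m r) as [h|h]; auto. exfalso.
destruct (homog_system_nontrivial_sol r m a h) as [c [[l [hl hc]] hc2]].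
apply hc, (hind c); auto. intros t ht.
rewrite (sumR_ext _ _ (fun l => sumR r (fun p => c l * a l p * Y p t))).
- rewrite sumR_swap, (sumR_ext _ _ (fun _ => 0)); [apply sumR_zero|].
  intros p hp. rewrite sumR_mult_r, hc2 by auto. ring.
- intros q hq. rewrite hX, <- sumR_mult_l by auto. apply sumR_ext; intros; ring.
Qed.

Lemma indepR_le_dim n m X : indepR n m X -> (m <= n)%nat.
Proof.
intros h. apply (indepR_in_span_le n m n X (fun p t => if Nat.eqb p t then 1 else 0) X h).
intros l t hl ht. rewrite (sumR_ext _ _ (fun p => if Nat.eqb t p then X l p else 0)).
- rewrite sumR_delta_r; auto.
- intros p hp. destruct (Nat.eqb_spec p t), (Nat.eqb_spec t p); subst; try lia; ring.
Qed.

Lemma lin_indep_le_dim n m w : lin_indep n m w -> (m <= n)%nat.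
Proof. apply indepR_le_dim. Qed.

Lemma lin_indep_prefix n a b w : (a <= b)%nat -> lin_indep n b w -> lin_indep n a w.
Proof.
intros hab h c hc l hl.
set (c' := fun l => if (l <? a)%nat then c l else 0).
assert (hl' : c' l = 0).
{ apply (h c'); [|lia]. intros t ht. replace b with (a + (b - a))%nat by lia.
  rewrite sumR_split, (sumR_ext (b - a) _ (fun _ => 0)), sumR_zero, Rplus_0_r.
  - rewrite <- (hc t ht). apply sumR_ext. intros q hq.
    unfold c'. destruct (Nat.ltb_spec q a); auto; lia.
  - intros q hq. unfold c'. destruct (Nat.ltb_spec (a + q) a); [lia|ring]. }
unfold c' in hl'. destruct (Nat.ltb_spec l a); auto; lia.
Qed.

Definition in_combination (n j : nat) (y : nat -> vecZ) (x : vecR) : Prop :=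
  exists d : nat -> R, forall t, (t < n)%nat -> x t = sumR j (fun l => d l * IZR (y l t)).

Definition extend_family (w : nat -> vecZ) (j : nat) (u : vecZ) : nat -> vecZ :=
  fun l => if (l <? j)%nat then w l else u.

Lemma extend_family_lt w j u l : (l < j)%nat -> extend_family w j u l = w l.
Proof. intros h. unfold extend_family. destruct (Nat.ltb_spec l j); auto; lia. Qed.

Lemma extend_family_last w j u : extend_family w j u j = u.
Proof. unfold extend_family. destruct (Nat.ltb_spec j j); auto; lia. Qed.

Lemma lin_indep_extend n j w u : lin_indep n j w ->
  ~ in_combination n j w (fun t => IZR (u t)) ->
  lin_indep n (S j) (extend_family w j u).
Proof.
intros h hn c hc.
assert (hw : forall t, sumR j (fun l => c l * IZR (extend_family w j u l t))
                       = sumR j (fun l => c l * IZR (w l t))).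
{ intros t. apply sumR_ext. intros l hl. rewrite extend_family_lt; auto. }
assert (cj : c j = 0).
{ destruct (Req_dec (c j) 0) as [e|e]; auto. exfalso. apply hn.
  exists (fun l => - c l / c j). intros t ht. specialize (hc t ht). simpl in hc.
  rewrite hw, extend_family_last in hc.
  rewrite (sumR_ext _ _ (fun l => c l * IZR (w l t) * (- / c j))) by (intros; field; auto).
  rewrite sumR_mult_r. replace (sumR j (fun l => c l * IZR (w l t))) with (- (c j * IZR (u t)))
    by lra.
  field; auto. }
intros l hl. destruct (Nat.eq_dec l j) as [->|]; auto.
apply (h c); [|lia]. intros t ht. specialize (hc t ht). simpl in hc.
rewrite hw, extend_family_last, cj in hc. lra.
Qed.

Definition inspan (n : nat) (T : vecZ -> Prop) (x : vecR) : Prop :=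
  exists (m : nat) (w : nat -> vecZ) (c : nat -> R),
    (forall l, (l < m)%nat -> T (w l)) /\
    forall t, (t < n)%nat -> x t = sumR m (fun l => c l * IZR (w l t)).

Lemma inspan_mono n (T T' : vecZ -> Prop) x :
  (forall v, T v -> T' v) -> inspan n T x -> inspan n T' x.
Proof. intros h [m [w [c [h1 h2]]]]. exists m, w, c. split; auto. Qed.

Lemma inspan_ext n T x y :
  (forall t, (t < n)%nat -> x t = y t) -> inspan n T x -> inspan n T y.
Proof.
intros h [m [w [c [h1 h2]]]]. exists m, w, c. split; auto.
intros t ht. rewrite <- h; auto.
Qed.

Lemma inspan_mem n (T : vecZ -> Prop) v : T v -> inspan n T (fun t => IZR (v t)).
Proof.
intros h. exists 1%nat, (fun _ => v), (fun _ => 1).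
split; [auto|intros; simpl; ring].
Qed.

Lemma inspan_zero n T : inspan n T (fun _ => 0).
Proof. exists O, (fun _ _ => 0%Z), (fun _ => 0). split; [intros; lia|auto]. Qed.

Lemma inspan_scal n T a x : inspan n T x -> inspan n T (fun t => a * x t).
Proof.
intros [m [w [c [h1 h2]]]]. exists m, w, (fun l => a * c l). split; auto.
intros t ht. rewrite h2, <- sumR_mult_l by auto. apply sumR_ext; intros; ring.
Qed.

Lemma inspan_add n T x y :
  inspan n T x -> inspan n T y -> inspan n T (fun t => x t + y t).
Proof.
intros [m1 [w1 [c1 [h1 h2]]]] [m2 [w2 [c2 [g1 g2]]]].
exists (m1 + m2)%nat, (fun l => if (l <? m1)%nat then w1 l else w2 (l - m1)%nat),
  (fun l => if (l <? m1)%nat then c1 l else c2 (l - m1)%nat).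
split.
- intros l hl. destruct (Nat.ltb_spec l m1); auto. apply g1; lia.
- intros t ht. rewrite sumR_split, h2, g2 by auto. f_equal.
  + apply sumR_ext; intros l hl. destruct (Nat.ltb_spec l m1); auto; lia.
  + apply sumR_ext; intros l hl. destruct (Nat.ltb_spec (m1 + l) m1); [lia|].
    replace (m1 + l - m1)%nat with l by lia. auto.
Qed.

Lemma inspan_sum n T m (c : nat -> R) (X : nat -> vecR) :
  (forall l, (l < m)%nat -> inspan n T (X l)) ->
  inspan n T (fun t => sumR m (fun l => c l * X l t)).
Proof.
induction m; intros h; simpl.
- apply inspan_zero.
- apply inspan_add; [apply IHm; intros; apply h; lia|apply inspan_scal, h; lia].
Qed.

Lemma inspan_of_combination n T j y x :
  (forall l, (l < j)%nat -> T (y l)) -> in_combination n j y x -> inspan n T x.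
Proof.
intros hy [d hd]. eapply inspan_ext; [intros t ht; symmetry; apply hd; auto|].
apply inspan_sum. intros l hl. apply inspan_mem. auto.
Qed.

Lemma finite_choice {A : Type} (P : nat -> A -> Prop) m (a0 : A) :
  (forall l, (l < m)%nat -> exists a, P l a) -> exists f, forall l, (l < m)%nat -> P l (f l).
Proof.
induction m; intros h.
- exists (fun _ => a0). intros; lia.
- destruct IHm as [f hf]; [intros; apply h; lia|].
  destruct (h m ltac:(lia)) as [a ha].
  exists (fun l => if Nat.eqb l m then a else f l). intros l hl.
  destruct (Nat.eqb_spec l m); [subst; auto|apply hf; lia].
Qed.

Lemma combination_of_inspan n T j y x :
  (forall v, T v -> in_combination n j y (fun t => IZR (v t))) ->
  inspan n T x -> in_combination n j y x.
Proof.
intros hT [m [w [c [h1 h2]]]].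
destruct (finite_choice (fun q d => forall t, (t < n)%nat ->
            IZR (w q t) = sumR j (fun l => d l * IZR (y l t))) m (fun _ => 0)) as [d hd].
{ intros q hq. apply hT; auto. }
exists (fun p => sumR m (fun q => c q * d q p)). intros t ht.
rewrite h2 by auto.
rewrite (sumR_ext _ _ (fun q => sumR j (fun p => c q * d q p * IZR (y p t)))).
- rewrite sumR_swap. apply sumR_ext. intros p hp. rewrite sumR_mult_r. auto.
- intros q hq. rewrite hd, <- sumR_mult_l by auto. apply sumR_ext; intros; ring.
Qed.

Lemma exists_frontier (P : nat -> Prop) N : P O -> ~ P (S N) -> exists r, P r /\ ~ P (S r).
Proof.
intros h0 hN. apply NNPP. intros hn. apply hN.
assert (forall r, P r) as hall by
  (induction r; auto; apply NNPP; intros hr; apply hn; exists r; auto).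
auto.
Qed.

Lemma maximal_indep_family n (T : vecZ -> Prop) : exists r y,
  lin_indep n r y /\ (forall l, (l < r)%nat -> T (y l)) /\
  forall v, T v -> in_combination n r y (fun t => IZR (v t)).
Proof.
set (P := fun r => exists y, lin_indep n r y /\ forall l, (l < r)%nat -> T (y l)).
destruct (exists_frontier P n) as [r [[y [hy hyT]] hr]].
- exists (fun _ _ => 0%Z). split; [intros c _ l hl; lia|intros; lia].
- intros [w [hw _]]. pose proof (lin_indep_le_dim n (S n) _ hw). lia.
- exists r, y. repeat split; auto. intros v hv. apply NNPP. intros hn. apply hr.
  exists (extend_family y r v). split; [apply lin_indep_extend; auto|].
  intros l hl. unfold extend_family. destruct (Nat.ltb_spec l r); auto.
Qed.

Lemma lin_indep_from_span n (T : vecZ -> Prop) m (x : nat -> vecZ) :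
  lin_indep n m x -> (forall l, (l < m)%nat -> inspan n T (fun t => IZR (x l t))) ->
  exists w, lin_indep n m w /\ forall l, (l < m)%nat -> T (w l).
Proof.
intros hx hsp. destruct (maximal_indep_family n T) as [r [y [hy [hyT hmax]]]].
destruct (finite_choice (fun l a => forall t, (t < n)%nat ->
            IZR (x l t) = sumR r (fun p => a p * IZR (y p t))) m (fun _ => 0)) as [a ha].
{ intros l hl. apply (combination_of_inspan n T); auto. }
assert (m <= r)%nat.
{ apply (indepR_in_span_le n m r (fun l t => IZR (x l t)) (fun p t => IZR (y p t)) a hx).
  intros l t hl ht. apply ha; auto. }
exists y. split; [apply (lin_indep_prefix n m r); auto|intros l hl; apply hyT; lia].
Qed.

Lemma inspan_trans n T T' x : (forall v, T v -> inspan n T' (fun t => IZR (v t))) ->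
  inspan n T x -> inspan n T' x.
Proof.
intros hT [m [w [c [h1 h2]]]].
apply (inspan_ext n T' (fun t => sumR m (fun l => c l * IZR (w l t)))).
- intros t ht. rewrite h2; auto.
- apply inspan_sum. intros l hl. apply hT, h1; auto.
Qed.

Lemma normAv_nonneg n M v : 0 <= normAv n M v.
Proof. apply sqrt_pos. Qed.

Lemma normAv_sq n M v : normAv n M v ^ 2 = sumR n (fun i => (matvec n M v i) ^ 2).
Proof.
unfold normAv. rewrite <- Rsqr_pow2. apply Rsqr_sqrt.
apply sumR_nonneg. intros; nra.
Qed.

Lemma matvec_abs_le_normAv n M v l : (l < n)%nat -> Rabs (matvec n M v l) <= normAv n M v.
Proof.
intros hl. apply Rsqr_incr_0_var; [|apply normAv_nonneg].
rewrite <- Rsqr_abs, !Rsqr_pow2, normAv_sq.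
apply (sumR_term_le n (fun i => matvec n M v i ^ 2)); auto. intros; nra.
Qed.

Lemma normAv_ext n M v v' : (forall t, (t < n)%nat -> v t = v' t) ->
  normAv n M v = normAv n M v'.
Proof.
intros h. unfold normAv. f_equal. apply sumR_ext. intros i hi. f_equal. unfold matvec.
apply sumR_ext. intros j hj. rewrite h; auto.
Qed.

Lemma matvec_mul n Q M v i :
  matvec n (mat_mul n Q M) v i = sumR n (fun l => Q i l * matvec n M v l).
Proof.
unfold matvec, mat_mul.
rewrite (sumR_ext _ _ (fun j => sumR n (fun l => Q i l * (M l j * IZR (v j))))).
- rewrite sumR_swap. apply sumR_ext. intros l hl. rewrite sumR_mult_l. auto.
- intros j hj. rewrite <- sumR_mult_r. apply sumR_ext; intros; ring.
Qed.

Lemma normAv_SO_mul n Q M v : SO n Q -> normAv n (mat_mul n Q M) v = normAv n M v.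
Proof.
intros [_ hQ]. unfold normAv. f_equal.
set (y := matvec n M v).
rewrite (sumR_ext _ _ (fun i => sumR n (fun l => sumR n (fun q => Q i l * Q i q * (y l * y q))))).
- rewrite sumR_swap. apply sumR_ext. intros l hl. rewrite sumR_swap.
  rewrite (sumR_ext _ _ (fun q => if Nat.eqb l q then y l * y q else 0)).
  + rewrite sumR_delta_r by auto. ring.
  + intros q hq. rewrite sumR_mult_r, hQ by auto. destruct (Nat.eqb l q); ring.
- intros i hi. rewrite matvec_mul, sq_sumR.
  apply sumR_ext; intros. apply sumR_ext; intros. unfold y; ring.
Qed.

Definition l1norm (n : nat) (v : vecZ) : R := sumR n (fun t => Rabs (IZR (v t))).

Lemma l1norm_nonneg n v : 0 <= l1norm n v.
Proof. apply sumR_nonneg. intros; apply Rabs_pos. Qed.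

Definition coercive (n : nat) (M : mat) (C : R) : Prop :=
  0 <= C /\ forall v, l1norm n v <= C * normAv n M v.

Lemma coercive_l1norm_le n M C v b : coercive n M C -> normAv n M v <= b ->
  l1norm n v <= C * b.
Proof. intros [hC hg] h. eapply Rle_trans; [apply hg|apply Rmult_le_compat_l; auto]. Qed.

Definition mat_abs_sum (n : nat) (P : mat) : R :=
  sumR n (fun t => sumR n (fun l => Rabs (P t l))).

Lemma mat_abs_sum_nonneg n P : 0 <= mat_abs_sum n P.
Proof. apply sumR_nonneg; intros; apply sumR_nonneg; intros; apply Rabs_pos. Qed.

Lemma left_inverse_matvec n (A P : mat) v t :
  (forall t j, (t < n)%nat -> (j < n)%nat ->
     sumR n (fun l => P t l * A l j) = if Nat.eqb t j then 1 else 0) ->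
  (t < n)%nat -> IZR (v t) = sumR n (fun l => P t l * matvec n A v l).
Proof.
intros hP ht. unfold matvec.
rewrite (sumR_ext _ _ (fun l => sumR n (fun j => P t l * A l j * IZR (v j)))).
- rewrite sumR_swap, (sumR_ext _ _ (fun j => if Nat.eqb t j then IZR (v j) else 0)).
  + rewrite sumR_delta_r; auto.
  + intros j hj. rewrite sumR_mult_r, hP by auto. destruct (Nat.eqb t j); ring.
- intros l hl. rewrite <- sumR_mult_l. apply sumR_ext; intros; ring.
Qed.

Lemma matvec_perturb n A B v l eps : (l < n)%nat ->
  (forall j, (j < n)%nat -> Rabs (B l j - A l j) <= eps) ->
  Rabs (matvec n B v l - matvec n A v l) <= eps * l1norm n v.
Proof.
intros hl h. unfold matvec, l1norm. rewrite <- sumR_sub, <- sumR_mult_l.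
eapply Rle_trans; [apply sumR_abs|]. apply sumR_le. intros j hj.
replace (B l j * IZR (v j) - A l j * IZR (v j)) with ((B l j - A l j) * IZR (v j)) by ring.
rewrite Rabs_mult. apply Rmult_le_compat_r; [apply Rabs_pos|auto].
Qed.

Lemma matvec_abs_le n A v l : (l < n)%nat -> Rabs (matvec n A v l) <= mat_abs_sum n A * l1norm n v.
Proof.
intros hl. pose proof (matvec_perturb n A (fun _ _ => 0) v l (mat_abs_sum n A) hl) as h.
replace (matvec n (fun _ _ => 0) v l) with 0 in h
  by (unfold matvec; rewrite (sumR_ext _ _ (fun _ => 0)), sumR_zero; auto; intros; ring).
rewrite Rminus_0_l, Rabs_Ropp in h. apply h.
intros j hj. rewrite Rminus_0_l, Rabs_Ropp. unfold mat_abs_sum.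
eapply Rle_trans; [|apply (sumR_term_le n _ l); auto].
- apply (sumR_term_le n (fun j => Rabs (A l j))); auto. intros; apply Rabs_pos.
- intros; apply sumR_nonneg; intros; apply Rabs_pos.
Qed.

(* If [P A = 1], then [|v|_1 <= |P| (|Bv| + eps |v|_1)] for [B] entrywise [eps]-close to [A];
   the hypothesis [|P| eps <= 1/2] absorbs the last term. *)
Lemma coercive_near n (A B P : mat) eps :
  (forall t j, (t < n)%nat -> (j < n)%nat ->
     sumR n (fun l => P t l * A l j) = if Nat.eqb t j then 1 else 0) ->
  (forall i j, (i < n)%nat -> (j < n)%nat -> Rabs (B i j - A i j) <= eps) ->
  mat_abs_sum n P * eps <= / 2 -> coercive n B (2 * mat_abs_sum n P).
Proof.
intros hP hB heps. pose proof (mat_abs_sum_nonneg n P). split; [lra|]. intros v.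
assert (ht : forall t, (t < n)%nat -> Rabs (IZR (v t))
            <= sumR n (fun l => Rabs (P t l)) * (normAv n B v + eps * l1norm n v)).
{ intros t ht. rewrite (left_inverse_matvec n A P v t hP ht).
  eapply Rle_trans; [apply sumR_abs|]. rewrite <- sumR_mult_r. apply sumR_le.
  intros l hl. rewrite Rabs_mult. apply Rmult_le_compat_l; [apply Rabs_pos|].
  pose proof (matvec_perturb n A B v l eps hl (fun j hj => hB l j hl hj)) as hd.
  rewrite Rabs_minus_sym in hd.
  pose proof (matvec_abs_le_normAv n B v l hl).
  pose proof (Rabs_triang (matvec n A v l - matvec n B v l) (matvec n B v l)) as htr.
  replace (matvec n A v l - matvec n B v l + matvec n B v l) with (matvec n A v l) in htr
    by ring.
  lra. }
assert (l1norm n v <= mat_abs_sum n P * (normAv n B v + eps * l1norm n v)).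
{ unfold l1norm at 1, mat_abs_sum. rewrite <- sumR_mult_r. apply sumR_le. auto. }
pose proof (l1norm_nonneg n v). pose proof (normAv_nonneg n B v). nra.
Qed.

Lemma coercive_of_left_inverse n (A P : mat) :
  (forall t j, (t < n)%nat -> (j < n)%nat ->
     sumR n (fun l => P t l * A l j) = if Nat.eqb t j then 1 else 0) ->
  coercive n A (2 * mat_abs_sum n P).
Proof.
intros hP. apply (coercive_near n A A P 0); auto.
- intros. replace (A i j - A i j) with 0 by ring. rewrite Rabs_R0; lra.
- rewrite Rmult_0_r. lra.
Qed.

Lemma abs_sub_sqrt_bound x y e : 0 <= x -> 0 <= y -> 0 < e ->
  Rabs (x ^ 2 - y ^ 2) < e ^ 2 -> Rabs (x - y) < e.
Proof.
intros hx hy he h.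
assert (Rabs (x - y) * Rabs (x - y) <= Rabs (x ^ 2 - y ^ 2)).
{ replace (x ^ 2 - y ^ 2) with ((x - y) * (x + y)) by ring. rewrite Rabs_mult.
  apply Rmult_le_compat_l; [apply Rabs_pos|]. rewrite (Rabs_right (x + y)) by lra.
  unfold Rabs; destruct (Rcase_abs (x - y)); lra. }
pose proof (Rabs_pos (x - y)). nra.
Qed.

Lemma normAv_uniform_near n A eta R0 : 0 < eta -> 0 <= R0 -> exists eps, 0 < eps /\
  forall B, (forall i j, (i < n)%nat -> (j < n)%nat -> Rabs (B i j - A i j) <= eps) ->
  forall v, l1norm n v <= R0 -> Rabs (normAv n B v - normAv n A v) < eta.
Proof.
intros heta hR.
set (al := mat_abs_sum n A). assert (hal : 0 <= al) by apply mat_abs_sum_nonneg.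
set (K := INR n * (R0 * (R0 + 2 * al * R0))).
assert (hK : 0 <= K) by (apply Rmult_le_pos; [apply pos_INR|nra]).
set (eps := Rmin 1 (eta ^ 2 / (K + 1))).
assert (he0 : 0 < eps) by (apply Rmin_pos; [lra|apply Rdiv_lt_0_compat; nra]).
assert (hlt : eps * K < eta ^ 2).
{ apply Rle_lt_trans with (eta ^ 2 / (K + 1) * K); [apply Rmult_le_compat_r, Rmin_r; auto|].
  apply (Rmult_lt_reg_r (K + 1)); [lra|]. field_simplify; [|lra].
  assert (0 < eta ^ 2) by (apply pow_lt; lra). nra. }
exists eps. split; auto. intros B hB v hv.
apply abs_sub_sqrt_bound; try apply normAv_nonneg; auto.
apply Rle_lt_trans with (eps * K); auto.
rewrite !normAv_sq, <- sumR_sub. eapply Rle_trans; [apply sumR_abs|].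
unfold K. rewrite <- sumR_const, <- sumR_mult_l. apply sumR_le. intros l hl.
pose proof (matvec_perturb n A B v l eps hl (fun j hj => hB l j hl hj)) as h1.
pose proof (matvec_abs_le n A v l hl) as h2. fold al in h2.
pose proof (l1norm_nonneg n v). assert (eps <= 1) by apply Rmin_l.
set (d := matvec n B v l - matvec n A v l) in *.
replace (matvec n B v l ^ 2 - matvec n A v l ^ 2) with (d * (d + 2 * matvec n A v l))
  by (unfold d; ring).
rewrite Rabs_mult.
pose proof (Rabs_triang d (2 * matvec n A v l)) as h3.
rewrite Rabs_mult, (Rabs_right 2) in h3 by lra.
replace (eps * (R0 * (R0 + 2 * al * R0))) with ((eps * R0) * (R0 + 2 * al * R0)) by ring.
apply Rmult_le_compat; try apply Rabs_pos; nra.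
Qed.

Definition zrange (K : nat) : list Z :=
  map (fun i => (Z.of_nat i - Z.of_nat K)%Z) (seq 0 (2 * K + 1)).

Lemma in_zrange K z : (Z.abs z <= Z.of_nat K)%Z -> In z (zrange K).
Proof.
intros h. unfold zrange. apply in_map_iff. exists (Z.to_nat (z + Z.of_nat K)).
split; [rewrite Z2Nat.id by lia; lia|apply in_seq; lia].
Qed.

Fixpoint int_box (n K : nat) : list vecZ :=
  match n with
  | O => (fun _ => 0%Z) :: nil
  | S n' => flat_map (fun v => map (fun z => fun t => if Nat.eqb t n' then z else v t)
                                   (zrange K)) (int_box n' K)
  end.

Lemma in_int_box n K v : (forall t, (t < n)%nat -> (Z.abs (v t) <= Z.of_nat K)%Z) ->
  exists u, In u (int_box n K) /\ forall t, (t < n)%nat -> u t = v t.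
Proof.
revert v. induction n; intros v h.
- exists (fun _ => 0%Z). split; [simpl; auto|intros; lia].
- destruct (IHn v) as [u [hu hu2]]; [intros; apply h; lia|].
  exists (fun t => if Nat.eqb t n then v n else u t). split.
  + simpl. apply in_flat_map. exists u. split; auto. apply in_map_iff.
    exists (v n). split; auto. apply in_zrange, h; lia.
  + intros t ht. destruct (Nat.eqb_spec t n); [subst; auto|apply hu2; lia].
Qed.

Lemma list_gap_above (L : list R) x : exists d, 0 < d /\ forall y, In y L -> ~ (x < y < x + d).
Proof.
induction L as [|y0 L [d [hd h]]].
- exists 1. split; [lra|intros y []].
- destruct (Rlt_dec x y0).
  + exists (Rmin d (y0 - x)). split; [apply Rmin_pos; lra|].
    pose proof (Rmin_l d (y0 - x)). pose proof (Rmin_r d (y0 - x)).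
    intros y [<-|hy]; [lra|]. intros hh. apply (h y hy). lra.
  + exists d. split; auto. intros y [<-|hy]; [lra|auto].
Qed.

(* Coercivity confines the integer vectors of length below [x + 1] to a finite box. *)
Lemma normAv_gap n M C x : coercive n M C ->
  exists d, 0 < d /\ forall v, ~ (x < normAv n M v < x + d).
Proof.
intros [hC hg].
set (K := Z.to_nat (up (C * (Rabs x + 1)))).
destruct (list_gap_above (map (normAv n M) (int_box n K)) x) as [d [hd hL]].
exists (Rmin d 1). split; [apply Rmin_pos; lra|].
intros v hv. pose proof (Rmin_l d 1). pose proof (Rmin_r d 1).
assert (hb : forall t, (t < n)%nat -> (Z.abs (v t) <= Z.of_nat K)%Z).
{ intros t ht.
  assert (h1 : Rabs (IZR (v t)) <= C * (Rabs x + 1)).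
  { eapply Rle_trans; [apply (sumR_term_le n (fun t => Rabs (IZR (v t)))); auto|].
    - intros; apply Rabs_pos.
    - fold (l1norm n v). eapply Rle_trans; [apply hg|apply Rmult_le_compat_l; auto].
      pose proof (Rle_abs x). lra. }
  rewrite <- abs_IZR in h1. pose proof (archimed (C * (Rabs x + 1))) as [ha _].
  assert (IZR (Z.abs (v t)) < IZR (up (C * (Rabs x + 1)))) as hlt by lra.
  apply lt_IZR in hlt. unfold K. rewrite Z2Nat.id by lia. lia. }
destruct (in_int_box n K v hb) as [w [hw hw2]].
apply (hL (normAv n M w)); [apply in_map; auto|].
rewrite (normAv_ext n M w v hw2). lra.
Qed.

Lemma normAv_gaps n M C (x : nat -> R) m : coercive n M C ->
  exists d, 0 < d /\ forall i, (i < m)%nat -> forall v, ~ (x i < normAv n M v < x i + d).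
Proof.
intros hg. induction m as [|m [d1 [hd1 h1]]].
- exists 1. split; [lra|intros; lia].
- destruct (normAv_gap n M C (x m) hg) as [d2 [hd2 h2]].
  exists (Rmin d1 d2). split; [apply Rmin_pos; auto|].
  pose proof (Rmin_l d1 d2). pose proof (Rmin_r d1 d2).
  intros i hi v hv. destruct (Nat.eq_dec i m) as [->|].
  + apply (h2 v). lra.
  + apply (h1 i ltac:(lia) v). lra.
Qed.

Lemma is_inf_exists (S : R -> Prop) : (exists r, S r) -> (forall r, S r -> 0 <= r) ->
  exists s, is_inf S s.
Proof.
intros [r0 h0] hpos.
destruct (completeness (fun y => S (- y))) as [m [hm1 hm2]].
- exists 0. intros y hy. specialize (hpos _ hy). lra.
- exists (- r0). rewrite Ropp_involutive. auto.
- exists (- m). split.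
  + intros r hr. assert (- r <= m) by (apply hm1; rewrite Ropp_involutive; auto). lra.
  + intros b hb. assert (m <= - b) by (apply hm2; intros y hy; specialize (hb _ hy); lra).
    lra.
Qed.

Definition std_basis (l : nat) : vecZ := fun t => if Nat.eqb l t then 1%Z else 0%Z.

Lemma std_basis_indep n j : (j <= n)%nat -> lin_indep n j std_basis.
Proof.
intros hj c hc l hl. specialize (hc l ltac:(lia)).
rewrite (sumR_ext _ _ (fun q => if Nat.eqb q l then c q else 0)), sumR_delta_l in hc; auto.
intros q hq. unfold std_basis. destruct (Nat.eqb_spec q l); simpl; ring.
Qed.

Lemma syst_is_inf n M j : (j <= n)%nat -> is_inf (syst_set n M j) (syst n M j).
Proof.
intros hj. unfold syst. apply epsilon_spec, is_inf_exists; [|intros r [hr _]; lra].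
exists (1 + sumR j (fun l => normAv n M (std_basis l))). split.
- pose proof (sumR_nonneg j (fun l => normAv n M (std_basis l)) (fun l _ => normAv_nonneg n M _)).
  lra.
- exists std_basis. split; [apply std_basis_indep; auto|]. intros l hl.
  pose proof (sumR_term_le j (fun l => normAv n M (std_basis l)) l
                (fun l _ => normAv_nonneg n M _) hl).
  lra.
Qed.

Lemma syst_nonneg n M j : (j <= n)%nat -> 0 <= syst n M j.
Proof. intros hj. apply (syst_is_inf n M j hj). intros r [hr _]; lra. Qed.

Lemma syst_le_of_family n M j w b : (j <= n)%nat -> lin_indep n j w ->
  (forall l, (l < j)%nat -> normAv n M (w l) <= b) -> 0 <= b -> syst n M j <= b.
Proof.
intros hj hw hb hb0. apply Rnot_lt_le. intros hlt.
assert (syst n M j <= (syst n M j + b) / 2); [|lra].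
apply (syst_is_inf n M j hj). split; [lra|]. exists w. split; auto.
intros l hl. specialize (hb l hl). lra.
Qed.

Lemma family_of_syst_lt n M j b : (j <= n)%nat -> syst n M j < b ->
  exists w, lin_indep n j w /\ forall l, (l < j)%nat -> normAv n M (w l) < b.
Proof.
intros hj hb. apply NNPP. intros hn.
assert (b <= syst n M j); [|lra].
apply (syst_is_inf n M j hj). intros r [hr [w [hw hw2]]].
apply Rnot_lt_le. intros hrb. apply hn. exists w. split; auto.
intros l hl. specialize (hw2 l hl). lra.
Qed.

Lemma syst_le_mono n M a b : (a <= b)%nat -> (b <= n)%nat -> syst n M a <= syst n M b.
Proof.
intros hab hb. apply (syst_is_inf n M b hb). intros r [hr [w [hw hw2]]].
apply (syst_is_inf n M a ltac:(lia)). split; auto. exists w. split.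
- apply (lin_indep_prefix n a b); auto.
- intros l hl; apply hw2; lia.
Qed.

Lemma syst_range n M i : (i <= n)%nat -> 0 <= syst n M i <= syst n M n.
Proof. intros hi. split; [apply syst_nonneg|apply syst_le_mono]; lia. Qed.

Lemma syst_attained n M C j : coercive n M C -> (j <= n)%nat ->
  exists w, lin_indep n j w /\ forall l, (l < j)%nat -> normAv n M (w l) <= syst n M j.
Proof.
intros hg hj. destruct (normAv_gap n M C (syst n M j) hg) as [d [hd hgap]].
destruct (family_of_syst_lt n M j (syst n M j + d) hj ltac:(lra)) as [w [hw hw2]].
exists w. split; auto. intros l hl. apply Rnot_lt_le. intros hlt.
apply (hgap (w l)). specialize (hw2 l hl). lra.
Qed.

Definition short_vec (n : nat) (M : mat) (r : R) : vecZ -> Prop :=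
  fun v => normAv n M v <= r.

Lemma Lambda_succ n M j x : Lambda n M (S j) x <-> inspan n (short_vec n M (syst n M (S j))) x.
Proof. reflexivity. Qed.

Lemma Lambda_mem n M j v : (1 <= j)%nat -> normAv n M v <= syst n M j ->
  Lambda n M j (fun t => IZR (v t)).
Proof. intros hj hv. destruct j as [|j]; [lia|]. apply Lambda_succ, inspan_mem. auto. Qed.

Lemma Lambda_mono n M a b x : (1 <= a)%nat -> (a <= b)%nat -> (b <= n)%nat ->
  Lambda n M a x -> Lambda n M b x.
Proof.
intros ha hab hb. destruct a as [|a]; [lia|]. destruct b as [|b]; [lia|].
rewrite !Lambda_succ. apply inspan_mono. unfold short_vec. intros v hv.
pose proof (syst_le_mono n M (S a) (S b) hab hb). lra.
Qed.

(* Adding a vector [u] outside [Lambda_i] to a basis of it would give [i+1] independent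
   vectors of length at most [max (syst_i) |Au|], so [|Au| >= syst_(i+1)]. *)
Lemma Lambda_of_normAv_lt_next n A C i u : coercive n A C -> (1 <= i)%nat -> (S i <= n)%nat ->
  syst n A i < syst n A (S i) -> normAv n A u < syst n A (S i) ->
  Lambda n A i (fun t => IZR (u t)).
Proof.
intros gA h1 h2 hlt hu. destruct i as [|i]; [lia|]. rewrite Lambda_succ.
apply NNPP. intros hn.
destruct (syst_attained n A C (S i) gA ltac:(lia)) as [y [hy hy2]].
assert (hind : lin_indep n (S (S i)) (extend_family y (S i) u)).
{ apply lin_indep_extend; auto. intros hd. apply hn.
  apply (inspan_of_combination n _ (S i) y); auto. }
assert (hmax : syst n A (S (S i)) <= Rmax (syst n A (S i)) (normAv n A u)).
{ pose proof (Rmax_l (syst n A (S i)) (normAv n A u)).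
  pose proof (Rmax_r (syst n A (S i)) (normAv n A u)).
  apply (syst_le_of_family n A _ (extend_family y (S i) u)); auto.
  - intros q hq. unfold extend_family. destruct (Nat.ltb_spec q (S i)) as [hqi|]; [|lra].
    specialize (hy2 q hqi). lra.
  - pose proof (normAv_nonneg n A u). lra. }
unfold Rmax in hmax. destruct (Rle_dec (syst n A (S i)) (normAv n A u)); lra.
Qed.

Lemma syst_Lambda_of_normAv_eq n M M' : (forall v, normAv n M v = normAv n M' v) ->
  syst n M = syst n M' /\ Lambda n M = Lambda n M'.
Proof.
intros h. assert (e : normAv n M = normAv n M') by (apply functional_extensionality; auto).
unfold Lambda, syst, syst_set. rewrite e. auto.
Qed.

Lemma syst_le_of_indep_in_span n M m (x : nat -> vecZ) T r : (m <= n)%nat ->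
  lin_indep n m x -> (forall l, (l < m)%nat -> inspan n T (fun t => IZR (x l t))) ->
  (forall v, T v -> normAv n M v <= r) -> 0 <= r -> syst n M m <= r.
Proof.
intros hm hx hsp hT hr. destruct (lin_indep_from_span n T m x hx hsp) as [u [hu hu2]].
apply (syst_le_of_family n M m u); auto.
Qed.

Lemma syst_le_of_indep_in_Lambda n M m j (x : nat -> vecZ) : (m <= n)%nat -> (1 <= j <= n)%nat ->
  lin_indep n m x -> (forall l, (l < m)%nat -> Lambda n M j (fun t => IZR (x l t))) ->
  syst n M m <= syst n M j.
Proof.
intros hm hj hx hL. destruct j as [|j]; [lia|].
apply (syst_le_of_indep_in_span n M m x (short_vec n M (syst n M (S j)))); auto.
apply syst_nonneg; lia.
Qed.

Lemma kappa_prop_not_lt n M A i j j' : (j < j' <= n)%nat -> (1 <= j)%nat ->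
  kappa_prop n M A i j -> ~ kappa_prop n M A i j'.
Proof.
intros hjj' hj [hs hnext] [hs' _]. apply hnext; [lia|]. intros x; split; intros hx.
- apply hs', (Lambda_mono n M (S j) j'); auto; lia.
- apply (Lambda_mono n M j (S j)); try lia. apply hs; auto.
Qed.

Lemma kappa_prop_unique n M A i j j' : (1 <= j <= n)%nat -> (1 <= j' <= n)%nat ->
  kappa_prop n M A i j -> kappa_prop n M A i j' -> j' = j.
Proof.
intros hj hj' hp hp'. destruct (lt_eq_lt_dec j' j) as [[hlt|heq]|hlt]; auto; exfalso.
- apply (kappa_prop_not_lt n M A i j' j); auto; lia.
- apply (kappa_prop_not_lt n M A i j j'); auto; lia.
Qed.

Fixpoint last_index (f : nat -> bool) (j : nat) : nat :=
  match j with O => O | S j' => if f (S j') then S j' else last_index f j' end.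

Lemma last_index_spec f m : (last_index f m <= m)%nat /\
  (last_index f m = O \/ f (last_index f m) = true) /\
  forall j, (last_index f m < j <= m)%nat -> f j = false.
Proof.
induction m as [|m [h1 [h2 h3]]]; simpl.
- repeat split; auto. intros; lia.
- destruct (f (S m)) eqn:e.
  + repeat split; auto. intros; lia.
  + repeat split; auto. intros j hj. destruct (Nat.eq_dec j (S m)) as [->|]; auto.
    apply h3; lia.
Qed.

(* The paper's [kappa(k,i)] for [B = B_k]: the largest [j <= n] with
   [syst_j(B) <= syst_i(A) + eps] (and [0] if there is none, or if [i = 0]). *)
Definition kappa_index (n : nat) (B A : mat) (eps : R) (i : nat) : nat :=
  if Nat.eqb i 0 then O
  else last_index (fun j => if Rle_dec (syst n B j) (syst n A i + eps) then true else false) n.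

(* All vectors compared below have [A]- or [B]-length at most [syst_n(A) + 2], hence
   [l1norm] at most [C * (syst_n(A) + 2)] by coercivity. *)
Definition close (n : nat) (A B : mat) (C eta : R) : Prop :=
  forall v, l1norm n v <= C * (syst n A n + 2) -> Rabs (normAv n B v - normAv n A v) < eta.

Record comparable (n : nat) (A B : mat) (C eps : R) : Prop := {
  cmp_eps_range : 0 < eps <= 1;
  cmp_coercive_A : coercive n A C;
  cmp_coercive_B : coercive n B C;
  cmp_gap_A : forall i, (1 <= i <= n)%nat ->
    forall v, ~ (syst n A i < normAv n A v < syst n A i + 2 * eps);
  cmp_close : close n A B C (eps / 2) }.

Lemma kappa_index_0 n B A eps : kappa_index n B A eps 0 = O.
Proof. reflexivity. Qed.

Section Comparison.
Variables (n : nat) (A B : mat) (C eps : R).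
Hypothesis AB_comparable : comparable n A B C eps.

Let eps_range := cmp_eps_range _ _ _ _ _ AB_comparable.
Let coercive_A := cmp_coercive_A _ _ _ _ _ AB_comparable.
Let coercive_B := cmp_coercive_B _ _ _ _ _ AB_comparable.
Let gap_A := cmp_gap_A _ _ _ _ _ AB_comparable.
Let close_B := cmp_close _ _ _ _ _ AB_comparable.
Let kap := kappa_index n B A eps.

Lemma close_of_normA_le eta v : close n A B C eta -> normAv n A v <= syst n A n + 2 ->
  normAv n A v - eta < normAv n B v < normAv n A v + eta.
Proof.
intros hc hv.
assert (l1norm n v <= C * (syst n A n + 2)) as hl by (apply (coercive_l1norm_le n A); auto).
pose proof (Rabs_def2 _ _ (hc v hl)). lra.
Qed.

Lemma close_of_normB_le eta v : close n A B C eta -> normAv n B v <= syst n A n + 2 ->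
  normAv n A v - eta < normAv n B v < normAv n A v + eta.
Proof.
intros hc hv.
assert (l1norm n v <= C * (syst n A n + 2)) as hl by (apply (coercive_l1norm_le n B); auto).
pose proof (Rabs_def2 _ _ (hc v hl)). lra.
Qed.

Lemma syst_B_le_A_add eta i : close n A B C eta -> (1 <= i <= n)%nat -> 0 <= eta ->
  syst n B i <= syst n A i + eta.
Proof.
intros hc hi heta. pose proof (syst_range n A i ltac:(lia)).
destruct (syst_attained n A C i coercive_A ltac:(lia)) as [w [hw hw2]].
apply (syst_le_of_family n B i w); auto; try lia; try lra.
intros l hl. specialize (hw2 l hl).
pose proof (close_of_normA_le eta (w l) hc ltac:(lra)). lra.
Qed.

Lemma kappa_index_spec i : (1 <= i <= n)%nat ->
  (i <= kap i <= n)%nat /\ syst n B (kap i) <= syst n A i + eps /\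
  forall j, (kap i < j <= n)%nat -> syst n A i + eps < syst n B j.
Proof.
intros hi.
assert (hk : kap i = last_index (fun j => if Rle_dec (syst n B j) (syst n A i + eps)
                                          then true else false) n).
{ unfold kap, kappa_index. destruct (Nat.eqb_spec i 0); [lia|auto]. }
destruct (last_index_spec (fun j => if Rle_dec (syst n B j) (syst n A i + eps)
                                    then true else false) n) as [s1 [s2 s3]].
rewrite <- hk in s1, s2, s3.
assert (hgt : forall j, (kap i < j <= n)%nat -> syst n A i + eps < syst n B j).
{ intros j h. specialize (s3 j h).
  destruct (Rle_dec (syst n B j) (syst n A i + eps)); [discriminate|lra]. }
assert (hii : syst n B i <= syst n A i + eps/2)
  by (apply (syst_B_le_A_add (eps / 2)); auto; lra).
assert (hik : (i <= kap i)%nat).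
{ apply Nat.nlt_ge. intros hlt. specialize (hgt i ltac:(lia)). lra. }
repeat split; auto.
destruct s2 as [e|e]; [lia|].
destruct (Rle_dec (syst n B (kap i)) (syst n A i + eps)); [auto|discriminate].
Qed.

Lemma kappa_index_pos i : (1 <= i <= n)%nat -> (1 <= kap i <= n)%nat.
Proof. intros hi. destruct (kappa_index_spec i hi) as [h _]. lia. Qed.

Lemma normA_le_of_normB_le i v : (1 <= i <= n)%nat ->
  normAv n B v <= syst n A i + eps -> normAv n A v <= syst n A i.
Proof.
intros hi hv. pose proof (syst_range n A i ltac:(lia)).
pose proof (close_of_normB_le (eps / 2) v close_B ltac:(lra)).
apply Rnot_lt_le. intros hlt. apply (gap_A i hi v). lra.
Qed.

Lemma Lambda_B_kappa_sub i x : (1 <= i <= n)%nat -> Lambda n B (kap i) x -> Lambda n A i x.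
Proof.
intros hi. destruct (kappa_index_spec i hi) as [hk [hle _]].
destruct i as [|i]; [lia|]. destruct (kap (S i)) as [|j]; [lia|].
rewrite !Lambda_succ. apply inspan_mono. intros v hv.
apply normA_le_of_normB_le; auto. unfold short_vec in hv. lra.
Qed.

(* A short vector of [A] outside [Lambda_kap(B)] would extend a maximal family of [B],
   contradicting the maximality of [kap i]. *)
Lemma short_A_in_Lambda_B i v : (1 <= i <= n)%nat -> normAv n A v <= syst n A i ->
  Lambda n B (kap i) (fun t => IZR (v t)).
Proof.
intros hi hv. destruct (kappa_index_spec i hi) as [hk [hle hgt]].
pose proof (syst_range n A i ltac:(lia)).
destruct (kap i) as [|j] eqn:ek; [lia|]. rewrite Lambda_succ. apply NNPP. intros hn.
destruct (syst_attained n B C (S j) coercive_B ltac:(lia)) as [y [hy hy2]].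
assert (hind : lin_indep n (S (S j)) (extend_family y (S j) v)).
{ apply lin_indep_extend; auto. intros hd. apply hn.
  apply (inspan_of_combination n _ (S j) y); auto. }
destruct (Nat.eq_dec (S j) n) as [e|e]; [pose proof (lin_indep_le_dim n _ _ hind); lia|].
pose proof (close_of_normA_le (eps / 2) v close_B ltac:(lra)).
pose proof (hgt (S (S j)) ltac:(lia)).
enough (syst n B (S (S j)) <= syst n A i + eps) by lra.
apply (syst_le_of_family n B (S (S j)) (extend_family y (S j) v)); auto; try lia; try lra.
intros q hq. unfold extend_family. destruct (Nat.ltb_spec q (S j)) as [hqj|]; [|lra].
specialize (hy2 q hqj). lra.
Qed.

Lemma Lambda_A_sub_B_kappa i x : (1 <= i <= n)%nat -> Lambda n A i x -> Lambda n B (kap i) x.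
Proof.
intros hi hx. pose proof (short_A_in_Lambda_B i) as hshort.
pose proof (kappa_index_pos i hi).
destruct i as [|i]; [lia|]. destruct (kap (S i)) as [|j]; [lia|].
rewrite Lambda_succ in hx |- *. revert hx. apply inspan_trans. intros v hv.
apply hshort; auto.
Qed.

Lemma kappa_prop_kappa_index i : (1 <= i <= n)%nat -> kappa_prop n B A i (kap i).
Proof.
intros hi. destruct (kappa_index_spec i hi) as [hk [hle hgt]].
assert (hsame : same_space (Lambda n B (kap i)) (Lambda n A i)).
{ intros x; split; [apply Lambda_B_kappa_sub|apply Lambda_A_sub_B_kappa]; auto. }
split; auto. intros hne hs.
destruct (syst_attained n B C (S (kap i)) coercive_B ltac:(lia)) as [z [hz hz2]].
pose proof (hgt (S (kap i)) ltac:(lia)).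
enough (syst n B (S (kap i)) <= syst n B (kap i)) by lra.
apply (syst_le_of_indep_in_Lambda n B _ _ z); auto; try lia.
intros l hl. apply hsame, hs, Lambda_mem; [lia|apply hz2; auto].
Qed.

Lemma syst_B_kappa_le eta i : close n A B C eta -> (1 <= i <= n)%nat -> 0 < eta ->
  syst n B (kap i) <= syst n A i + eta.
Proof.
intros hc hi heta. pose proof (kappa_index_pos i hi). pose proof (syst_range n A i ltac:(lia)).
destruct (syst_attained n B C (kap i) coercive_B ltac:(lia)) as [y [hy hy2]].
apply (syst_le_of_indep_in_span n B (kap i) y (short_vec n A (syst n A i))); auto; try lia;
  try lra.
- intros l hl. destruct i as [|i]; [lia|]. rewrite <- Lambda_succ.
  apply Lambda_B_kappa_sub; [lia|]. apply Lambda_mem; [lia|auto].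
- intros v hv. unfold short_vec in hv.
  pose proof (close_of_normA_le eta v hc ltac:(lra)). lra.
Qed.

(* For [i > 0] the vectors found below [syst_(i+1)(A)] lie in [Lambda_i(A) = Lambda_kap(B)],
   so they cannot be [kap i + 1] independent vectors. *)
Lemma syst_A_le_B_after_kappa eta i : close n A B C eta -> 0 < eta ->
  (S i <= n)%nat -> (S (kap i) <= n)%nat -> (i = O \/ syst n A i < syst n A (S i)) ->
  syst n A (S i) - eta <= syst n B (S (kap i)).
Proof.
intros hc heta hi hki hcase. apply Rnot_lt_le. intros hlt.
pose proof (syst_range n A (S i) hi).
destruct (family_of_syst_lt n B (S (kap i)) (syst n A (S i) - eta) hki hlt) as [x [hx hx2]].
assert (hxA : forall l, (l < S (kap i))%nat -> normAv n A (x l) < syst n A (S i)).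
{ intros l hl. specialize (hx2 l hl).
  pose proof (close_of_normB_le eta (x l) hc ltac:(lra)). lra. }
destruct i as [|i].
- pose proof (hxA O ltac:(lia)).
  enough (syst n A 1 <= normAv n A (x O)) by lra.
  apply (syst_le_of_family n A 1 x); auto; [|apply normAv_nonneg].
  intros l hl. replace l with O by lia. lra.
- destruct hcase as [|hlt1]; [lia|].
  destruct (kappa_index_spec (S i) ltac:(lia)) as [hk [hle hgt]].
  pose proof (hgt (S (kap (S i))) ltac:(lia)).
  enough (syst n B (S (kap (S i))) <= syst n B (kap (S i))) by lra.
  apply (syst_le_of_indep_in_Lambda n B _ _ x); auto; try lia.
  intros l hl. apply Lambda_A_sub_B_kappa; [lia|].
  apply (Lambda_of_normAv_lt_next n A C); auto; lia.
Qed.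

Lemma syst_B_near_A eta i i' j : close n A B C eta -> 0 < eta ->
  (1 <= i <= n)%nat -> (1 <= i' <= n)%nat ->
  syst n A i' = syst n A i -> (forall l, (1 <= l < i')%nat -> syst n A l <> syst n A i) ->
  (kap (i' - 1) < j <= kap i)%nat -> Rabs (syst n B j - syst n A i) <= eta.
Proof.
intros hc heta hi hi' hsi' hmin hj. pose proof (kappa_index_pos i hi).
assert (hcase : (i' - 1 = O)%nat \/ syst n A (i' - 1) < syst n A (S (i' - 1))).
{ destruct (Nat.eq_dec i' 1) as [|hne]; [left; lia|right].
  replace (S (i' - 1)) with i' by lia.
  pose proof (syst_le_mono n A (i' - 1) i' ltac:(lia) ltac:(lia)).
  specialize (hmin (i' - 1)%nat ltac:(lia)). rewrite hsi' in *. lra. }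
pose proof (syst_A_le_B_after_kappa eta (i' - 1) hc heta ltac:(lia) ltac:(lia) hcase) as hlow.
replace (S (i' - 1)) with i' in hlow by lia.
pose proof (syst_B_kappa_le eta i hc hi heta).
pose proof (syst_le_mono n B (S (kap (i' - 1))) j ltac:(lia) ltac:(lia)).
pose proof (syst_le_mono n B j (kap i) ltac:(lia) ltac:(lia)).
apply Rabs_le. lra.
Qed.
End Comparison.

Lemma eventually_forall_lt (Q : nat -> nat -> Prop) m :
  (forall i, (i < m)%nat -> exists K, forall k, (K <= k)%nat -> Q i k) ->
  exists K, forall k, (K <= k)%nat -> forall i, (i < m)%nat -> Q i k.
Proof.
induction m; intros h.
- exists O. intros; lia.
- destruct IHm as [K1 h1]; [intros; apply h; lia|].
  destruct (h m ltac:(lia)) as [K2 h2].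
  exists (max K1 K2). intros k hk i hi.
  destruct (Nat.eq_dec i m) as [->|]; [apply h2; lia|apply h1; lia].
Qed.

Lemma entrywise_eventually_close n (B : nat -> mat) (A : mat) :
  (forall i j, (i < n)%nat -> (j < n)%nat -> Un_cv (fun k => B k i j) (A i j)) ->
  forall e, 0 < e -> exists K, forall k, (K <= k)%nat ->
    forall i j, (i < n)%nat -> (j < n)%nat -> Rabs (B k i j - A i j) <= e.
Proof.
intros h e he.
destruct (eventually_forall_lt (fun i k => forall j, (j < n)%nat -> Rabs (B k i j - A i j) <= e) n)
  as [K hK].
- intros i hi.
  destruct (eventually_forall_lt (fun j k => Rabs (B k i j - A i j) <= e) n) as [K hK].
  + intros j hj. destruct (h i j hi hj e he) as [K hK]. exists K. intros k hk.
    specialize (hK k hk). unfold R_dist in hK. lra.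
  + exists K. intros k hk j hj. apply hK; auto.
- exists K. intros k hk i j hi hj. apply hK; auto.
Qed.

Section Convergence.
Variables (n : nat) (B : nat -> mat) (A : mat).
Hypothesis B_cv : forall i j, (i < n)%nat -> (j < n)%nat -> Un_cv (fun k => B k i j) (A i j).

Lemma close_eventually C eta : 0 <= C -> 0 < eta ->
  exists K, forall k, (K <= k)%nat -> close n A (B k) C eta.
Proof.
intros hC heta. pose proof (syst_range n A n (le_n n)).
destruct (normAv_uniform_near n A eta (C * (syst n A n + 2)) heta ltac:(nra)) as [e [he hnear]].
destruct (entrywise_eventually_close n B A B_cv e he) as [K hK].
exists K. intros k hk v hv. apply hnear; auto.
Qed.

Lemma comparable_eventually : det n A <> 0 ->
  exists C eps K, 0 <= C /\ forall k, (K <= k)%nat -> comparable n A (B k) C eps.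
Proof.
intros hdet. destruct (det_neq0_left_inverse n A hdet) as [P hP].
set (p := mat_abs_sum n P). pose proof (mat_abs_sum_nonneg n P) as hp. fold p in hp.
assert (coercive_A : coercive n A (2 * p)) by (apply coercive_of_left_inverse; auto).
destruct (normAv_gaps n A (2 * p) (syst n A) (S n) coercive_A) as [d [hd hgap]].
set (eps := Rmin (d / 2) 1).
assert (heps : 0 < eps <= 1 /\ 2 * eps <= d).
{ pose proof (Rmin_l (d / 2) 1). pose proof (Rmin_r (d / 2) 1).
  pose proof (Rmin_pos (d / 2) 1 ltac:(lra) ltac:(lra)). unfold eps. lra. }
assert (he : 0 < / (2 * (p + 1))) by (apply Rinv_0_lt_compat; lra).
destruct (entrywise_eventually_close n B A B_cv _ he) as [K1 hK1].
destruct (close_eventually (2 * p) (eps / 2) ltac:(lra) ltac:(lra)) as [K2 hK2].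
exists (2 * p), eps, (max K1 K2). split; [lra|]. intros k hk. split; auto.
- lra.
- apply (coercive_near n A (B k) P (/ (2 * (p + 1)))); auto; [apply hK1; lia|].
  fold p. apply (Rmult_le_reg_l (2 * (p + 1))); [lra|]. field_simplify; lra.
- intros i hi v hv. apply (hgap i ltac:(lia) v). lra.
- apply hK2; lia.
Qed.
End Convergence.

Lemma kappa_prop_of_normAv_eq n M M' A i j : (forall v, normAv n M v = normAv n M' v) ->
  kappa_prop n M A i j <-> kappa_prop n M' A i j.
Proof.
intros h. destruct (syst_Lambda_of_normAv_eq n M M' h) as [_ e].
unfold kappa_prop. rewrite e. tauto.
Qed.

Theorem mainTheorem10 (n : nat) (Aseq : nat -> mat) (A : mat) :
  (forall k, SL n (Aseq k)) -> SL n A ->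
  (* [Aseq k] -> [A] in SO_n \ SL_n R *)
  (exists Rot : nat -> mat, (forall k, SO n (Rot k)) /\
     forall i j, (i < n)%nat -> (j < n)%nat ->
       Un_cv (fun k => mat_mul n (Rot k) (Aseq k) i j) (A i j)) ->
  exists (k0 : nat) (kappa : nat -> nat -> nat),
    (forall k, (k0 <= k)%nat ->
       kappa k O = O /\
       forall i, (1 <= i <= n)%nat ->
         (1 <= kappa k i <= n)%nat /\ kappa_prop n (Aseq k) A i (kappa k i) /\
         forall j, (1 <= j <= n)%nat -> kappa_prop n (Aseq k) A i j -> j = kappa k i) /\
    (forall i i', (1 <= i <= n)%nat -> (1 <= i' <= n)%nat ->
       syst n A i' = syst n A i ->
       (forall l, (1 <= l < i')%nat -> syst n A l <> syst n A i) ->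
       forall jseq : nat -> nat,
         (forall k, (k0 <= k)%nat -> (kappa k (i' - 1) < jseq k <= kappa k i)%nat) ->
         Un_cv (fun k => syst n (Aseq k) (jseq k)) (syst n A i)).
Proof.
intros _ hA [Rot [hRot hconv]].
set (B := fun k => mat_mul n (Rot k) (Aseq k)).
assert (hnorm : forall k v, normAv n (Aseq k) v = normAv n (B k) v)
  by (intros k v; symmetry; apply normAv_SO_mul; auto).
destruct (comparable_eventually n B A hconv) as [C [eps [K [hC hcmp]]]];
  [unfold SL in hA; rewrite hA; lra|].
exists K, (fun k => kappa_index n (B k) A eps). split.
- intros k hk. split; [apply kappa_index_0|]. intros i hi.
  rewrite !(kappa_prop_of_normAv_eq n (Aseq k) (B k)) by auto.
  split; [apply (kappa_index_pos n A (B k) C eps); auto|].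
  split; [apply (kappa_prop_kappa_index n A (B k) C eps); auto|].
  intros j hj hp. apply (kappa_prop_of_normAv_eq n (Aseq k) (B k)) in hp; auto.
  apply (kappa_prop_unique n (B k) A i); auto.
  + apply (kappa_index_pos n A (B k) C eps); auto.
  + apply (kappa_prop_kappa_index n A (B k) C eps); auto.
- intros i i' hi hi' hsi' hmin jseq hjseq eta heta.
  destruct (close_eventually n B A hconv C (eta / 2) hC ltac:(lra)) as [K' hK'].
  exists (max K K'). intros k hk. unfold R_dist.
  rewrite (proj1 (syst_Lambda_of_normAv_eq n _ _ (hnorm k))).
  assert (Rabs (syst n (B k) (jseq k) - syst n A i) <= eta / 2); [|lra].
  apply (syst_B_near_A n A (B k) C eps (hcmp k ltac:(lia)) (eta / 2) i i');
    [apply hK'; lia|lra|auto..|apply hjseq; lia].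
Qed.
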